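(* The PIR capacity of the star graph $S_N$ on $N$ vertices satisfies $\mathscr{C}(S_N)\ge \frac{2}{N}$.
   Context: The star graph $S_N$ has $N$ vertices (servers), one (server $N$) of degree $N-1$ and the others of degree $1$; there are $K=N-1$ files, file $W_i$ stored on leaf server $i$ and on server $N$. Graph-based PIR model: files are independent, each uniform on $\mathbb{F}_2^L$; a user wants $W_\theta$, $\theta$ uniform on $[K]$ and independent of the files; it sends queries $Q_1,\dots,Q_N$ (independent of the files); server $i$ answers $A_i$, a deterministic function of $Q_i$ and the files on it. Reliability: $W_\theta$ is determined by all answers and queries. Privacy: $H(\theta\mid Q_i,W_{S_i})=\log K$ for every $i$, $W_{S_i}$ being the files on server $i$. The rate is $L/\sum_i H(A_i)$; the PIR capacity is the supremum of rates over all schemes and file lengths $L$. *)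

From HB Require Import structures.
From mathcomp Require Import all_boot all_order all_algebra.
From mathcomp Require Import reals exp.
Set Implicit Arguments. Unset Strict Implicit. Unset Printing Implicit Defensive.
Import Order.TTheory GRing.Theory Num.Theory.
Local Open Scope ring_scope.

(* Logarithm in base 2 (entropies measured in bits, file length L in bits). *)
Definition log2 {R : realType} (x : R) : R := ln x / ln 2.

Definition prob {R : realType} {Om : finType} (P : Om -> R) (E : pred Om) : R :=
  \sum_(w : Om | E w) P w.

(* Shannon entropy (bits) of a discrete random variable X : Om -> T:
   H(X) = - sum_x Pr[X=x] log2 Pr[X=x], written as an expectation over Om
   (terms with P w = 0 vanish, so 0 log 0 is never evaluated). *)
Definition entropy {R : realType} {Om : finType} {T : eqType}
  (P : Om -> R) (X : Om -> T) : R :=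
  - \sum_(w : Om) P w * log2 (prob P (fun v => X v == X w)).

Definition centropy {R : realType} {Om : finType} {T U : eqType}
  (P : Om -> R) (X : Om -> T) (Y : Om -> U) : R :=
  entropy P (fun w => (X w, Y w)) - entropy P Y.

(* A file is an element of F_2^L; the library is the K-tuple of files, K = N-1. *)
Definition file (L : nat) := {ffun 'I_L -> bool}.
Definition library (N L : nat) := {ffun 'I_N.-1 -> file L}.

(* Star graph S_N: servers 'I_N (server N of the paper is the last one, index
   N-1 here); file k ('I_(N-1)) is stored on leaf server k and on the centre. *)
Definition star_stores (N : nat) (i : 'I_N) (k : 'I_N.-1) : bool :=
  (val i == val k) || (val i == N.-1).

Definition stored_files (N L : nat) (i : 'I_N) (wl : library N L)
  : {ffun 'I_N.-1 -> option (file L)} :=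
  [ffun k => if star_stores i k then Some (wl k) else None].

(* A PIR scheme on S_N with file length L:
   P  : pmf on the finite sample space Om,
   W  : the files, th : the desired index,
   Q  : the queries (Q w i is the query to server i),
   f i: the deterministic answer function of server i. *)
Record star_PIR_scheme (R : realType) (N L : nat) (Om : finType) (QT AT : eqType)
  (P : Om -> R) (W : Om -> library N L) (th : Om -> 'I_N.-1)
  (Q : Om -> {ffun 'I_N -> QT}) (f : 'I_N -> QT -> library N L -> AT) : Prop := {
  pmf_ge0 : forall w, 0 <= P w;
  pmf_sum1 : \sum_(w : Om) P w = 1;
  files_indep : forall wl : library N L,
    prob P (fun v => W v == wl) = \prod_(k : 'I_N.-1) prob P (fun v => W v k == wl k);
  files_unif : forall (k : 'I_N.-1) (x : file L),
    prob P (fun v => W v k == x) = 1 / 2 ^+ L;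
  theta_unif : forall t : 'I_N.-1, prob P (fun v => th v == t) = 1 / (N.-1)%:R;
  theta_indep : forall (t : 'I_N.-1) (wl : library N L),
    prob P (fun v => (th v == t) && (W v == wl))
    = prob P (fun v => th v == t) * prob P (fun v => W v == wl);
  queries_indep : forall (t : 'I_N.-1) (q : {ffun 'I_N -> QT}) (wl : library N L),
    prob P (fun v => [&& th v == t, Q v == q & W v == wl])
    = prob P (fun v => (th v == t) && (Q v == q)) * prob P (fun v => W v == wl);
  answer_local : forall (i : 'I_N) (q : QT) (wl wl' : library N L),
    (forall k, star_stores i k -> wl k = wl' k) -> f i q wl = f i q wl';
  reliable :
    centropy P (fun v => W v (th v))
      (fun v => ([ffun i => f i (Q v i) (W v)], Q v, th v)) = 0;
  private : forall i : 'I_N,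
    centropy P th (fun v => (Q v i, stored_files i (W v))) = log2 (N.-1)%:R
}.

Definition star_rate (R : realType) (N L : nat) (Om : finType) (QT AT : eqType)
  (P : Om -> R) (W : Om -> library N L)
  (Q : Om -> {ffun 'I_N -> QT}) (f : 'I_N -> QT -> library N L -> AT) : R :=
  L%:R / \sum_(i : 'I_N) entropy P (fun v => f i (Q v i) (W v)).

Definition star_achievable_rate (R : realType) (N : nat) (r : R) : Prop :=
  exists (L : nat) (Om : finType) (QT AT : eqType) (P : Om -> R)
    (W : Om -> library N L) (th : Om -> 'I_N.-1)
    (Q : Om -> {ffun 'I_N -> QT}) (f : 'I_N -> QT -> library N L -> AT),
    (0 < L)%N /\ star_PIR_scheme P W th Q f /\ r = star_rate P W Q f.

From HB Require Import structures.
From mathcomp Require Import all_boot all_order all_algebra.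
From mathcomp Require Import reals exp.
From mathcomp Require Import perm.
Set Implicit Arguments. Unset Strict Implicit. Unset Printing Implicit Defensive.
Import Order.TTheory GRing.Theory Num.Theory.
Local Open Scope ring_scope.

(* Files of two bits.  The user draws a uniform bit position s_k for every
   file k; leaf k returns W_k(s_k) and the centre returns the XOR over k of
   W_k(s'_k), where s' is s with coordinate theta flipped.  The leaves reveal
   every W_k(s_k), so the centre's XOR yields the other bit of W_theta: two bits
   out of N one-bit answers.  Both s and s' are uniform whatever theta is, so no
   server learns anything about theta.  On the uniform sample space
   (theta, s, W), every uniformity, independence and entropy claim follows from
   bijections of the sample space that move one variable and fix another. *)

Section Log2.
Variable R : realType.

Lemma log2M (a b : R) : 0 < a -> 0 < b -> log2 (a * b) = log2 a + log2 b.
Proof. by move=> a_gt0 b_gt0; rewrite /log2 lnM ?posrE // mulrDl. Qed.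

Lemma log2V (a : R) : 0 < a -> log2 a^-1 = - log2 a.
Proof. by move=> a_gt0; rewrite /log2 lnV ?posrE // mulNr. Qed.

Lemma log2_2 : log2 (2 : R) = 1.
Proof. by rewrite /log2 divff // gt_eqF // ln_gt0 // ltr1n. Qed.

End Log2.

Lemma eq_prob (R : realType) (Om : finType) (P : Om -> R) (E E' : pred Om) :
  E =1 E' -> prob P E = prob P E'.
Proof. exact: eq_bigl. Qed.

Lemma centropy_eq0 (R : realType) (Om : finType) (T U : eqType) (P : Om -> R)
    (X : Om -> T) (Y : Om -> U) :
  (forall v w, Y v = Y w -> X v = X w) -> centropy P X Y = 0.
Proof.
move=> detXY; rewrite /centropy /entropy.
rewrite (eq_bigr (fun w => P w * log2 (prob P (fun v => Y v == Y w)))) ?subrr // => w _.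
congr (_ * log2 _); apply: eq_prob => v.
by rewrite xpair_eqE; case: (Y v =P Y w) => [/detXY ->|_]; rewrite ?eqxx ?andbF.
Qed.

(* [X] is symmetric given [Y] when the bijections of the sample space fixing [Y]
   act transitively on the values of [X]; under the uniform measure [X] is then
   uniform and independent of [Y]. *)
Definition symmetric_given (Om : finType) (T U : eqType)
    (X : Om -> T) (Y : Om -> U) : Prop :=
  forall x y : T, exists s : Om -> Om,
    [/\ bijective s, forall w, Y (s w) = Y w & forall w, (X (s w) == x) = (X w == y)].

Section UniformMeasure.
Context {R : realType} {Om : finType}.

Definition unif_pmf (w : Om) : R := #|Om|%:R^-1.

Lemma prob_unif_bij (s : Om -> Om) (E : pred Om) :
  bijective s -> prob unif_pmf E = prob unif_pmf (fun w => E (s w)).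
Proof. by move=> s_bij; rewrite /prob (reindex_inj (bij_inj s_bij)). Qed.

Lemma prob_symmetric_given (T : finType) (U : eqType) (X : Om -> T) (Y : Om -> U)
    (e : pred U) (x : T) :
  symmetric_given X Y ->
  prob unif_pmf (fun w => e (Y w) && (X w == x))
  = prob unif_pmf (fun w => e (Y w)) / #|T|%:R.
Proof.
move=> symXY.
have prob_eq y : prob unif_pmf (fun w => e (Y w) && (X w == y))
               = prob unif_pmf (fun w => e (Y w) && (X w == x)).
  have [s [s_bij sY sX]] := symXY x y.
  by rewrite [RHS](prob_unif_bij _ s_bij); apply: eq_prob => w /=; rewrite sY sX.
have T_gt0 : (0 < #|T|)%N by apply/card_gt0P; exists x.
have -> : prob unif_pmf (fun w => e (Y w))
          = \sum_(y : T) prob unif_pmf (fun w => e (Y w) && (X w == y)).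
  by rewrite /prob (partition_big X predT).
rewrite (eq_bigr _ (fun y _ => prob_eq y)).
rewrite sumr_const -[X in _ = X / _]mulr_natr mulfK //.
by rewrite pnatr_eq0 -lt0n.
Qed.

Hypothesis Om_gt0 : (0 < #|Om|)%N.

Lemma unif_pmf_gt0 (w : Om) : 0 < unif_pmf w.
Proof. by rewrite invr_gt0 ltr0n. Qed.

Lemma sum_unif_pmf : \sum_(w : Om) unif_pmf w = 1.
Proof. by rewrite sumr_const -(mulr_natr (#|Om|%:R^-1)) mulVf // pnatr_eq0 -lt0n. Qed.

Lemma prob_unif_gt0 (E : pred Om) (w : Om) : E w -> 0 < prob unif_pmf E.
Proof.
move=> Ew; rewrite /prob (bigD1 w) //= ltr_pwDl ?unif_pmf_gt0 //.
by apply: sumr_ge0 => v _; exact/ltW/unif_pmf_gt0.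
Qed.

Lemma card_gt0_fun (T : finType) (X : Om -> T) : (0 < #|T|)%N.
Proof. by have [w _] := card_gt0P Om_gt0; apply/card_gt0P; exists (X w). Qed.

Lemma prob_symmetric (T : finType) (U : eqType) (X : Om -> T) (Y : Om -> U) (x : T) :
  symmetric_given X Y -> prob unif_pmf (fun w => X w == x) = #|T|%:R^-1.
Proof.
move=> symXY; have := prob_symmetric_given predT x symXY.
by rewrite /= [prob _ predT]sum_unif_pmf div1r => <-.
Qed.

Lemma entropy_symmetric (T : finType) (U : eqType) (X : Om -> T) (Y : Om -> U) :
  symmetric_given X Y -> entropy unif_pmf X = log2 #|T|%:R.
Proof.
move=> symXY; rewrite /entropy.
under eq_bigr => w _ do rewrite (prob_symmetric _ symXY).
by rewrite -big_distrl /= sum_unif_pmf mul1r log2V ?opprK // ltr0n (card_gt0_fun X).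
Qed.

Lemma centropy_symmetric_given (T : finType) (U : eqType) (X : Om -> T) (Y : Om -> U) :
  symmetric_given X Y -> centropy unif_pmf X Y = log2 #|T|%:R.
Proof.
move=> symXY.
have log2_probXY w : log2 (prob unif_pmf (fun v => (X v, Y v) == (X w, Y w)))
    = log2 (prob unif_pmf (fun v => Y v == Y w)) - log2 #|T|%:R.
  rewrite -log2V ?ltr0n ?(card_gt0_fun X) // -log2M ?invr_gt0 ?ltr0n ?(card_gt0_fun X) //.
    rewrite -(prob_symmetric_given (pred1 (Y w)) (X w) symXY).
    by congr log2; apply: eq_prob => v; rewrite xpair_eqE andbC.
  exact: (prob_unif_gt0 (eqxx (Y w))).
rewrite /centropy /entropy.
under eq_bigr => w _ do rewrite log2_probXY mulrBr.
by rewrite sumrB -big_distrl /= sum_unif_pmf mul1r opprB opprK subrK.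
Qed.

End UniformMeasure.

Section Xor.
Variables (N L : nat).

Definition file_xor (a d : file L) : file L := [ffun j => a j (+) d j].

Definition library_xor (a d : library N L) : library N L :=
  [ffun k => file_xor (a k) (d k)].

Lemma file_xorK (d : file L) : involutive (file_xor ^~ d).
Proof. by move=> a; apply/ffunP => j; rewrite !ffunE addbK. Qed.

Lemma library_xorK (d : library N L) : involutive (library_xor ^~ d).
Proof. by move=> a; apply/ffunP => k; rewrite !ffunE file_xorK. Qed.

Lemma file_xor_eq (a x y : file L) : (file_xor a (file_xor x y) == x) = (a == y).
Proof.
apply/eqP/eqP => [/ffunP xor_ax | ->]; apply/ffunP => j; last first.
  by rewrite !ffunE addbCA addbb addbF.
by move: (xor_ax j); rewrite !ffunE; case: (a j) (x j) (y j) => [] [] [].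
Qed.

Lemma library_xor_eq (a x y : library N L) :
  (library_xor a (library_xor x y) == x) = (a == y).
Proof.
apply/eqP/eqP => [/ffunP xor_ax | ->]; apply/ffunP => k; last first.
  by rewrite !ffunE; apply/eqP; rewrite file_xor_eq.
by move: (xor_ax k); rewrite !ffunE => /eqP; rewrite file_xor_eq => /eqP.
Qed.

End Xor.

Lemma ord2_cases (j s : 'I_2) : j = s \/ j = rev_ord s.
Proof.
by case: j s => [[|[|?]] ?] [[|[|?]] ?] //; [left|right|right|left]; apply: val_inj.
Qed.

Lemma symmetric_given_coarsen (Om : finType) (T U V : eqType)
    (X : Om -> T) (Y : Om -> U) (Y' : Om -> V) :
  (forall v w, Y v = Y w -> Y' v = Y' w) ->
  symmetric_given X Y -> symmetric_given X Y'.
Proof.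
move=> detYY' symXY x y; have [s [s_bij sY sX]] := symXY x y.
by exists s; split=> // w; apply: detYY'.
Qed.

Section StarScheme.
Variables (R : realType) (n : nat).

Local Notation K := n.+1.
Local Notation positions := {ffun 'I_K -> 'I_2}.
Local Notation outcome := ('I_K * positions * library n.+2 2)%type.
Local Notation P := (unif_pmf : outcome -> R).

Definition theta (w : outcome) : 'I_K := w.1.1.
Definition pos (w : outcome) : positions := w.1.2.
Definition files (w : outcome) : library n.+2 2 := w.2.

Definition flip_at (t : 'I_K) (s : positions) : positions :=
  [ffun k => if k == t then rev_ord (s k) else s k].

Definition query (w : outcome) : {ffun 'I_n.+2 -> positions} :=
  [ffun i : 'I_n.+2 => if (i < K)%N then pos w else flip_at (theta w) (pos w)].

Definition answer (i : 'I_n.+2) (q : positions) (wl : library n.+2 2) : bool :=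
  if (i < K)%N then wl (inord i) (q (inord i))
  else \big[addb/false]_(k < K) wl k (q k).

Definition answers (w : outcome) : {ffun 'I_n.+2 -> bool} :=
  [ffun i => answer i (query w i) (files w)].

Definition leaf (k : 'I_K) : 'I_n.+2 := widen_ord (leqnSn K) k.

Lemma outcome_gt0 : (0 < #|{: outcome}|)%N.
Proof. by apply/card_gt0P; exists ((ord0, [ffun _ => ord0]), [ffun _ => [ffun _ => false]]). Qed.

Lemma flip_atK t : involutive (flip_at t).
Proof. by move=> s; apply/ffunP => k; rewrite !ffunE; case: eqP; rewrite ?rev_ordK. Qed.

Lemma query_leaf w k : query w (leaf k) = pos w.
Proof. by rewrite ffunE /= ltn_ord. Qed.

Lemma query_centre w : query w ord_max = flip_at (theta w) (pos w).
Proof. by rewrite ffunE /= ltnn. Qed.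

Lemma answer_leaf k q wl : answer (leaf k) q wl = wl k (q k).
Proof. by rewrite /answer /= ltn_ord inord_val. Qed.

Lemma answer_centre q wl : answer ord_max q wl = \big[addb/false]_(k < K) wl k (q k).
Proof. by rewrite /answer /= ltnn. Qed.

Lemma answers_leaf w k : answers w (leaf k) = files w k (pos w k).
Proof. by rewrite ffunE query_leaf answer_leaf. Qed.

Lemma answers_centre w :
  answers w ord_max = \big[addb/false]_(k < K) files w k (flip_at (theta w) (pos w) k).
Proof. by rewrite ffunE query_centre answer_centre. Qed.

Lemma decode_theta_file v w :
  (answers v, query v, theta v) = (answers w, query w, theta w) ->
  files v (theta v) = files w (theta w).
Proof.
move=> [answers_vw query_vw theta_vw].
have pos_vw : pos v = pos w by rewrite -(query_leaf v ord0) query_vw query_leaf.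
have leaf_vw k : files v k (pos w k) = files w k (pos w k).
  have := congr1 (fun a : {ffun _ -> bool} => a (leaf k)) answers_vw.
  by rewrite /= !answers_leaf pos_vw.
rewrite theta_vw; apply/ffunP => j; set t := theta w.
case: (ord2_cases j (pos w t)) => ->; first exact: leaf_vw.
have := congr1 (fun a : {ffun _ -> bool} => a ord_max) answers_vw.
rewrite /= !answers_centre theta_vw pos_vw.
rewrite (bigD1 t) // [in RHS](bigD1 t) //= /flip_at ffunE eqxx -/t.
rewrite (eq_bigr (fun k => files w k (flip_at t (pos w) k))) => [/addIb //|k].
move=> /negbTE k_neq_t.
by rewrite /flip_at ffunE k_neq_t leaf_vw.
Qed.

Definition shift_files (d : library n.+2 2) (w : outcome) : outcome :=
  (w.1, library_xor w.2 d).

Definition swap_theta (x y : 'I_K) (w : outcome) : outcome :=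
  ((tperm x y w.1.1, w.1.2), w.2).

(* Changes [theta] while keeping the centre's query [flip_at theta pos] fixed. *)
Definition swap_theta_centre (x y : 'I_K) (w : outcome) : outcome :=
  let t := tperm x y w.1.1 in ((t, flip_at t (flip_at w.1.1 w.1.2)), w.2).

Lemma shift_files_bij d : bijective (shift_files d).
Proof. by apply: inv_bij => -[tw W]; rewrite /shift_files /= library_xorK. Qed.

Lemma swap_theta_bij x y : bijective (swap_theta x y).
Proof. by apply: inv_bij => -[[t s] W]; rewrite /swap_theta /= tpermK. Qed.

Lemma swap_theta_centre_bij x y : bijective (swap_theta_centre x y).
Proof. by apply: inv_bij => -[[t s] W]; rewrite /swap_theta_centre /= tpermK !flip_atK. Qed.

Lemma tperm_eqL (x y z : 'I_K) : (tperm x y z == x) = (z == y).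
Proof. by rewrite -[X in _ == X](tpermR x y) (inj_eq perm_inj). Qed.

Lemma files_symmetric : symmetric_given files (fun w => (theta w, query w)).
Proof.
move=> x y; exists (shift_files (library_xor x y)); split=> //.
  exact: shift_files_bij.
by move=> w; apply: library_xor_eq.
Qed.

Lemma file_symmetric k : symmetric_given (fun w => files w k) (fun _ => tt).
Proof.
move=> x y; exists (shift_files [ffun _ => file_xor x y]); split=> //.
  exact: shift_files_bij.
by move=> w; rewrite /files /= !ffunE file_xor_eq.
Qed.

Lemma theta_symmetric : symmetric_given theta (fun w => (pos w, files w)).
Proof.
move=> x y; exists (swap_theta x y); split=> //; first exact: swap_theta_bij.
by move=> w; apply: tperm_eqL.
Qed.

Lemma theta_symmetric_centre :
  symmetric_given theta (fun w => (flip_at (theta w) (pos w), files w)).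
Proof.
move=> x y; exists (swap_theta_centre x y); split.
- exact: swap_theta_centre_bij.
- by move=> w; rewrite /swap_theta_centre /theta /pos /= flip_atK.
- by move=> w; apply: tperm_eqL.
Qed.

(* Flipping every bit of one file flips the answer of its leaf and the
   answer of the centre. *)
Lemma answer_symmetric i :
  symmetric_given (fun w => answer i (query w i) (files w)) (fun _ => tt).
Proof.
move=> x y; have xor_eq (a : bool) : (a (+) (x (+) y) == x) = (a == y).
  by case: a x y => [] [] [].
pose flip_file : library n.+2 2 := [ffun k => [ffun _ => (k == inord i) && (x (+) y)]].
exists (shift_files flip_file); split=> //; first exact: shift_files_bij.
move=> w; rewrite /answer /files /=; case: ifP => _; first by rewrite !ffunE eqxx xor_eq.
rewrite (eq_bigr (fun k => w.2 k (query w i k) (+) ((k == inord i) && (x (+) y))));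
  last by move=> k _; rewrite !ffunE.
have flip_sum : \big[addb/false]_(k < K) ((k == inord i) && (x (+) y)) = x (+) y.
  by rewrite (bigD1 (inord i)) //= eqxx big1 ?addbF // => k /negbTE ->.
by rewrite big_split /= flip_sum xor_eq.
Qed.

Lemma query_private i : centropy P theta
    (fun w => (query w i, stored_files i (files w))) = log2 K%:R.
Proof.
rewrite -[in RHS](card_ord K); apply: (centropy_symmetric_given outcome_gt0).
case: (ltnP i K) => i_lt.
  apply: symmetric_given_coarsen theta_symmetric => v w [pos_vw files_vw].
  by rewrite !ffunE i_lt pos_vw files_vw.
apply: symmetric_given_coarsen theta_symmetric_centre => v w [query_vw files_vw].
by rewrite !ffunE ltnNge i_lt /= query_vw files_vw.
Qed.

Lemma prob_files wl : prob P (fun w => files w == wl) = #|{: library n.+2 2}|%:R^-1.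
Proof. by rewrite (prob_symmetric outcome_gt0 _ files_symmetric). Qed.

Lemma prob_file k x : prob P (fun w => files w k == x) = #|{: file 2}|%:R^-1.
Proof. by rewrite (prob_symmetric outcome_gt0 _ (file_symmetric k)). Qed.

Lemma star_scheme : star_PIR_scheme P files theta query answer.
Proof.
split.
- by move=> w; apply/ltW/unif_pmf_gt0/outcome_gt0.
- exact: sum_unif_pmf outcome_gt0.
- move=> wl; rewrite prob_files (eq_bigr _ (fun k _ => prob_file k (wl k))).
  by rewrite prodr_const card_ffun card_ord natrX exprVn.
- by move=> k x; rewrite prob_file card_ffun card_bool card_ord natrX div1r.
- by move=> t; rewrite (prob_symmetric outcome_gt0 _ theta_symmetric) card_ord div1r.
- move=> t wl.
  by rewrite (prob_symmetric_given (fun p => p.1 == t) wl files_symmetric) prob_files.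
- move=> t q wl; rewrite prob_files.
  have /= <- := prob_symmetric_given (fun p => (p.1 == t) && (p.2 == q)) wl files_symmetric.
  by apply: eq_prob => w; rewrite andbA.
- move=> i q wl wl' same_files; rewrite /answer; case: ifP => i_lt.
    by rewrite same_files // /star_stores /= inordK ?eqxx // (leqW i_lt).
  apply: eq_bigr => k _; rewrite same_files // /star_stores; apply/orP; right.
  by rewrite /= eqn_leq -ltnS ltn_ord leqNgt i_lt.
- by apply: centropy_eq0; exact: decode_theta_file.
- exact: query_private.
Qed.

Lemma star_scheme_rate : star_rate P files query answer = 2 / n.+2%:R.
Proof.
rewrite /star_rate (eq_bigr (fun _ => 1)) => [|i _].
  by rewrite sumr_const card_ord.
by rewrite (entropy_symmetric outcome_gt0 (answer_symmetric i)) card_bool log2_2.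
Qed.

End StarScheme.

Lemma star_rate_achievable (R : realType) (n : nat) :
  star_achievable_rate n.+2 (2 / n.+2%:R : R).
Proof.
exists 2%N, _, _, _, unif_pmf, (@files n), (@theta n), (@query n), (@answer n).
by split=> //; split; [exact: star_scheme | rewrite star_scheme_rate].
Qed.

Theorem theorem5 (R : realType) (N : nat) (hN : (2 <= N)%N) (c : R) :
  (forall r : R, star_achievable_rate N r -> r <= c) -> 2 / N%:R <= c.
Proof.
case: N hN => [|[|n]] // _ rate_le_c.
exact/rate_le_c/star_rate_achievable.
Qed.
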